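(* Let $(\bar u,\bar v;\mu)$ and $(\bar u',\bar v';\mu')$ be two stable outcomes of a non-degenerate RiFle assignment game. Suppose $p_i\stackrel{\mu}{\longleftrightarrow}q_j$, $u_i=u'_i$ (so $p_i$ is indifferent between the two outcomes) and $v_j>v'_j$ (so $q_j$ strictly prefers $\mu$). Then $q_j$ is rigid. Symmetrically, if $p_i\stackrel{\mu}{\longleftrightarrow}q_j$, $v_j=v'_j$ and $u_i>u'_i$, then $p_i$ is rigid. (That is, an agent indifferent between the two outcomes cannot be preferred by a flexible agent.)
   Context: A RiFle assignment game consists of two disjoint sets of agents $P=\{p_1,\dots,p_n\}$ and $Q=\{q_1,\dots,q_n\}$, a pair of nonnegative real numbers $(\beta_{ij},\gamma_{ij})$ for every pair $(p_i,q_j)\in P\times Q$ (write $\alpha_{ij}=\beta_{ij}+\gamma_{ij}$), and a designation of every agent as rigid or flexible. Let $\mathcal R$ be the set of pairs with at least one rigid agent and $\mathcal F$ the set of pairs with both agents flexible. An outcome $(\bar u,\bar v;\mu)$ consists of a matching $\mu$ between $P$ and $Q$ (write $p_i\stackrel{\mu}{\longleftrightarrow} q_j$) and payoff vectors $\bar u,\bar v\in\mathbb R^n$. It is feasible if: (1) $u_i\ge0$, $v_j\ge0$; (2) if a rigid $p_i$ is matched to $q_j$ then $u_i=\beta_{ij}$ and, if $q_j$ is flexible, $v_j\ge\gamma_{ij}$; symmetrically for a rigid $q_j$ matched to $p_i$: $v_j=\gamma_{ij}$ and, if $p_i$ is flexible, $u_i\ge\beta_{ij}$; (3) $\sum_iu_i+\sum_jv_j=\sum_{p_i\stackrel{\mu}{\longleftrightarrow}q_j}\alpha_{ij}$.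 It is stable if feasible and $u_i+v_j\ge\alpha_{ij}$ for $(p_i,q_j)\in\mathcal F$ and ($u_i\ge\beta_{ij}$ or $v_j\ge\gamma_{ij}$) for $(p_i,q_j)\in\mathcal R$. Reservation prices are modeled by rigid dummy agents; for the following definition an agent left unmatched by a matching is regarded as matched to a rigid dummy agent. Given a coalition $C\subseteq P\cup Q$ and a matching $\mu$, the total payoff to $C$ under $\mu$ is forced if every pair matched under $\mu$ with one agent in $C$ and the other outside $C$ contains a rigid agent; the forced payoff is then $\sum_{p_i\in C,\ p_i\stackrel{\mu}{\longleftrightarrow}q_j}\beta_{ij}+\sum_{q_j\in C,\ p_i\stackrel{\mu}{\longleftrightarrow}q_j}\gamma_{ij}$. The game is non-degenerate if for any two matchings $\mu,\mu'$: whenever $C$ is a minimal coalition such that the payoff to $C$ is forced under both $\mu$ and $\mu'$, and the two forced payoffs are equal, then $\mu$ and $\mu'$ coincide on $C$. *)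

From mathcomp Require Import all_boot all_order all_algebra.
From mathcomp Require Import reals.
Set Implicit Arguments. Unset Strict Implicit. Unset Printing Implicit Defensive.
Import Order.TTheory GRing.Theory Num.Theory.
Local Open Scope ring_scope.

Record rifle_game (R : realType) (n : nat) := RiFle {
  beta : 'I_n -> 'I_n -> R;
  gamma : 'I_n -> 'I_n -> R;
  rigidP : 'I_n -> bool;
  rigidQ : 'I_n -> bool;
  beta_ge0 : forall i j, 0 <= beta i j;
  gamma_ge0 : forall i j, 0 <= gamma i j
}.

Section Defs.
Variables (R : realType) (n : nat) (G : rifle_game R n).

Definition alpha (i j : 'I_n) : R := beta G i j + gamma G i j.

(* A (possibly partial) matching between P and Q, given as a relation:
   M i j means p_i <-> q_j. *)
Definition is_matching (M : rel 'I_n) : Prop :=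
  (forall i j j', M i j -> M i j' -> j = j') /\
  (forall i i' j, M i j -> M i' j -> i = i').

Definition feasible (u v : 'I_n -> R) (M : rel 'I_n) : Prop :=
  [/\ (forall i, 0 <= u i) /\ (forall j, 0 <= v j),
      (forall i j, M i j -> rigidP G i ->
         u i = beta G i j /\ (~~ rigidQ G j -> gamma G i j <= v j)),
      (forall i j, M i j -> rigidQ G j ->
         v j = gamma G i j /\ (~~ rigidP G i -> beta G i j <= u i)) &
      \sum_(i < n) u i + \sum_(j < n) v j =
        \sum_(i < n) \sum_(j < n | M i j) alpha i j].

Definition stable (u v : 'I_n -> R) (M : rel 'I_n) : Prop :=
  [/\ feasible u v M,
      (forall i j, ~~ rigidP G i -> ~~ rigidQ G j -> alpha i j <= u i + v j) &
      (forall i j, rigidP G i || rigidQ G j ->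
         beta G i j <= u i \/ gamma G i j <= v j)].

(* The payoff to C is forced under M if every M-pair with one agent in C and
   the other outside C contains a rigid agent (unmatched agents are matched to
   rigid dummies, so impose no condition). *)
Definition forced (M : rel 'I_n) (CP CQ : {set 'I_n}) : Prop :=
  (forall i j, M i j -> i \in CP -> j \notin CQ -> rigidP G i || rigidQ G j) /\
  (forall i j, M i j -> j \in CQ -> i \notin CP -> rigidP G i || rigidQ G j).

(* The forced payoff (unmatched agents, matched to dummies, contribute 0). *)
Definition forced_payoff (M : rel 'I_n) (CP CQ : {set 'I_n}) : R :=
  \sum_(i in CP) \sum_(j < n | M i j) beta G i j +
  \sum_(j in CQ) \sum_(i < n | M i j) gamma G i j.

Definition nonempty_coalition (CP CQ : {set 'I_n}) : bool :=
  (CP != set0) || (CQ != set0).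

Definition minimal_forced_both (M M' : rel 'I_n) (CP CQ : {set 'I_n}) : Prop :=
  [/\ nonempty_coalition CP CQ, forced M CP CQ, forced M' CP CQ &
      forall CP' CQ' : {set 'I_n}, CP' \subset CP -> CQ' \subset CQ ->
        nonempty_coalition CP' CQ' -> forced M CP' CQ' -> forced M' CP' CQ' ->
        CP' = CP /\ CQ' = CQ].

Definition coincide_on (M M' : rel 'I_n) (CP CQ : {set 'I_n}) : Prop :=
  (forall i j, i \in CP -> M i j = M' i j) /\
  (forall i j, j \in CQ -> M i j = M' i j).

Definition non_degenerate : Prop :=
  forall M M' : rel 'I_n, is_matching M -> is_matching M' ->
  forall CP CQ : {set 'I_n},
    minimal_forced_both M M' CP CQ ->
    forced_payoff M CP CQ = forced_payoff M' CP CQ ->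
    coincide_on M M' CP CQ.

End Defs.

From mathcomp Require Import all_boot all_order all_algebra.
From mathcomp Require Import reals.
From mathcomp Require Import lra.
Import Order.TTheory GRing.Theory Num.Theory.
Local Open Scope ring_scope.

(* In a stable outcome every matched pair p_i, q_j is paid exactly alpha_ij
   and every unmatched agent gets 0: payoffs are nonnegative, matched pairs
   get at least alpha_ij, and the total payoff is the sum of these alpha_ij.
   Now let p_i <-> q_j under mu with u_i = u'_i and v_j > v'_j, and suppose
   q_j is flexible.  If p_i is flexible too, stability of the second outcome
   gives u'_i + v'_j >= alpha_ij = u_i + v_j, a contradiction.  If p_i is
   rigid, {p_i} is a minimal coalition whose payoff is forced under both
   matchings, with forced payoffs u_i = u'_i; non-degeneracy makes mu' match
   p_i to q_j too, and feasibility of the second outcome for the flexible q_j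
   gives v'_j >= gamma_ij = v_j.  The second statement is the first one for
   the game in which P and Q exchange their roles. *)

Section Matching.
Context {R : realType} {n : nat}.

Definition transpose_rel (M : rel 'I_n) : rel 'I_n := fun j i => M i j.

Context {M : rel 'I_n}.

Lemma is_matching_transpose : is_matching M -> is_matching (transpose_rel M).
Proof.
by case=> uniqQ uniqP; split=> [j i i' | j j' i]; [exact: uniqP | exact: uniqQ].
Qed.

Hypothesis matchM : is_matching M.

Lemma sum_matched_row (F : 'I_n -> R) {i k : 'I_n} :
  M i k -> \sum_(j | M i j) F j = F k.
Proof.
move=> Mik; rewrite (bigD1 k) //= big1 ?addr0 // => j /andP[Mij].
by rewrite (proj1 matchM _ _ _ Mij Mik) eqxx.
Qed.

Lemma sum_matched_row_le (x : R) i : 0 <= x -> \sum_(j | M i j) x <= x.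
Proof.
case: (pickP (M i)) => [k Mik | unmatched] x_ge0.
  by rewrite (sum_matched_row _ Mik).
by rewrite big_pred0.
Qed.

End Matching.

Definition transpose_game {R : realType} {n : nat} (G : rifle_game R n) :
  rifle_game R n :=
  @RiFle R n (fun j i => gamma G i j) (fun j i => beta G i j)
    (rigidQ G) (rigidP G) (fun j i => gamma_ge0 G i j) (fun j i => beta_ge0 G i j).

Section Transpose.
Context {R : realType} {n : nat} {G : rifle_game R n}.

Lemma stable_transpose {u v : 'I_n -> R} {M : rel 'I_n} :
  stable G u v M -> stable (transpose_game G) v u (transpose_rel M).
Proof.
case=> [[[u_ge0 v_ge0] rigidPpay rigidQpay total] flexible rigid].
split; first split.
- by [].
- by move=> j i; exact: rigidQpay.
- by move=> j i; exact: rigidPpay.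
- rewrite addrC total (exchange_big_dep xpredT) //=.
  by apply: eq_bigr => j _; apply: eq_bigr => i _; rewrite /alpha addrC.
- by move=> j i flexQ flexP; rewrite /alpha addrC [v j + _]addrC; exact: flexible.
- by move=> j i rigidQP; case: (rigid i j) => [|beta_le|gamma_le];
    [rewrite orbC | right | left].
Qed.

Lemma forced_transpose {M : rel 'I_n} {CP CQ : {set 'I_n}} :
  forced (transpose_game G) M CQ CP <-> forced G (transpose_rel M) CP CQ.
Proof.
by split=> -[out1 out2]; split=> a b Mab inA notinB; rewrite orbC;
  [exact: out2 | exact: out1 | exact: out2 | exact: out1].
Qed.

Lemma minimal_forced_both_transpose {M M' : rel 'I_n} {CP CQ : {set 'I_n}} :
  minimal_forced_both (transpose_game G) M M' CQ CP ->
  minimal_forced_both G (transpose_rel M) (transpose_rel M') CP CQ.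
Proof.
case=> nonempty forcedM forcedM' minimal; split.
- by rewrite /nonempty_coalition orbC.
- exact/forced_transpose.
- exact/forced_transpose.
move=> CP' CQ' subP subQ nonempty' forcedM1 forcedM1'.
suff [-> ->] : CQ' = CQ /\ CP' = CP by [].
by apply: minimal => //;
  [rewrite /nonempty_coalition orbC | exact/forced_transpose | exact/forced_transpose].
Qed.

Lemma non_degenerate_transpose :
  non_degenerate G -> non_degenerate (transpose_game G).
Proof.
move=> nondeg M M' matchM matchM' CQ CP minimal payoff.
have payoffT : forced_payoff G (transpose_rel M) CP CQ =
               forced_payoff G (transpose_rel M') CP CQ.
  by rewrite /forced_payoff addrC [RHS]addrC; exact: payoff.
have [sameP sameQ] := nondeg _ _ (is_matching_transpose matchM)
  (is_matching_transpose matchM') CP CQ (minimal_forced_both_transpose minimal) payoffT.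
by split=> j i; [exact: sameQ | exact: sameP].
Qed.

End Transpose.

Section StablePayoffs.
Context {R : realType} {n : nat} {G : rifle_game R n}.
Context {u v : 'I_n -> R} {M : rel 'I_n}.
Hypotheses (matchM : is_matching M) (stableM : stable G u v M).

Lemma stable_matched_le i j : M i j -> alpha G i j <= u i + v j.
Proof.
move=> Mij; case: stableM => [[_ rigidPpay rigidQpay _] flexible _].
rewrite /alpha; case rP: (rigidP G i).
  have [-> gamma_le] := rigidPpay _ _ Mij rP.
  case rQ: (rigidQ G j); first by have [-> _] := rigidQpay _ _ Mij rQ.
  by rewrite lerD2l gamma_le // rQ.
case rQ: (rigidQ G j).
  have [-> beta_le] := rigidQpay _ _ Mij rQ.
  by rewrite lerD2r beta_le // rP.
by apply: flexible; rewrite ?rP ?rQ.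
Qed.

(* [\sum_(j | M i j) u i] is [u i] if p_i is matched and 0 otherwise, so the
   first clause says that unmatched agents of P get 0. *)
Lemma stable_payoffs_tight :
  (forall i, \sum_(j | M i j) u i = u i) /\
  (forall i j, M i j -> u i + v j = alpha G i j).
Proof.
have [[[u_ge0 v_ge0] _ _ total] _ _] := stableM.
have slackP_ge0 i : 0 <= u i - \sum_(j | M i j) u i.
  by rewrite subr_ge0 sum_matched_row_le.
have slackQ_ge0 j : 0 <= v j - \sum_(i | M i j) v j.
  by rewrite subr_ge0 (sum_matched_row_le (is_matching_transpose matchM)).
have slack_pair_ge0 i j : M i j -> 0 <= u i + v j - alpha G i j.
  by move/stable_matched_le; rewrite subr_ge0.
have slack_row_ge0 i : 0 <= \sum_(j | M i j) (u i + v j - alpha G i j).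
  exact: sumr_ge0 (slack_pair_ge0 i).
have slack_eq0 : \sum_i (u i - \sum_(j | M i j) u i) +
    \sum_j (v j - \sum_(i | M i j) v j) +
    \sum_i \sum_(j | M i j) (u i + v j - alpha G i j) = 0.
  have swap : \sum_i \sum_(j | M i j) v j = \sum_j \sum_(i | M i j) v j.
    by rewrite (exchange_big_dep xpredT).
  rewrite !sumrB; under [X in _ + X]eq_bigr do rewrite sumrB big_split /=.
  by rewrite sumrB big_split /= swap; move: total; lra.
have sumP_ge0 : 0 <= \sum_i (u i - \sum_(j | M i j) u i).
  by apply: sumr_ge0 => i _.
have sumQ_ge0 : 0 <= \sum_j (v j - \sum_(i | M i j) v j).
  by apply: sumr_ge0 => j _.
have sum_pair_ge0 : 0 <= \sum_i \sum_(j | M i j) (u i + v j - alpha G i j).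
  by apply: sumr_ge0 => i _.
split=> [i | i j Mij].
  have sumP_eq0 : \sum_i (u i - \sum_(j | M i j) u i) = 0.
    by move: slack_eq0 sumP_ge0 sumQ_ge0 sum_pair_ge0; lra.
  by move: (psumr_eq0P (fun i _ => slackP_ge0 i) sumP_eq0 (i := i) isT); lra.
have sum_pair_eq0 : \sum_i \sum_(j | M i j) (u i + v j - alpha G i j) = 0.
  by move: slack_eq0 sumP_ge0 sumQ_ge0 sum_pair_ge0; lra.
have row_eq0 := psumr_eq0P (fun i _ => slack_row_ge0 i) sum_pair_eq0 (i := i) isT.
by move: (psumr_eq0P (slack_pair_ge0 i) row_eq0 Mij); lra.
Qed.

End StablePayoffs.

Section RigidAgent.
Context {R : realType} {n : nat} {G : rifle_game R n}.

Lemma minimal_forced_both_rigidP (M M' : rel 'I_n) {i : 'I_n} :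
  rigidP G i -> minimal_forced_both G M M' [set i] set0.
Proof.
move=> rigid_i.
have forced_i N : forced G N [set i] set0.
  by split=> a b _; rewrite !inE // => /eqP -> _; rewrite rigid_i.
split=> //; first by apply/orP; left; apply/set0Pn; exists i; rewrite inE.
move=> CP CQ; rewrite subset1 subset0 => /orP[/eqP-> | /eqP->] /eqP-> //.
by rewrite /nonempty_coalition eqxx.
Qed.

Lemma forced_payoff_rigidP {u v : 'I_n -> R} {M : rel 'I_n} {i : 'I_n} :
  is_matching M -> stable G u v M -> rigidP G i ->
  forced_payoff G M [set i] set0 = u i.
Proof.
move=> matchM stableM rigid_i.
have [paid_by_match _] := stable_payoffs_tight matchM stableM.
have [[_ rigidPpay _ _] _ _] := stableM.
rewrite /forced_payoff big_set1 big_set0 addr0 -[RHS]paid_by_match.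
by apply: eq_bigr => j Mij; have [-> _] := rigidPpay _ _ Mij rigid_i.
Qed.

End RigidAgent.

Section Indifference.
Context {R : realType} {n : nat} {G : rifle_game R n}.
Context {u v u' v' : 'I_n -> R} {M M' : rel 'I_n}.
Hypotheses (nondeg : non_degenerate G)
  (matchM : is_matching M) (matchM' : is_matching M')
  (stableM : stable G u v M) (stableM' : stable G u' v' M').

Lemma rigidP_indifferent_keeps_partner i j :
  rigidP G i -> u i = u' i -> M i j -> M' i j.
Proof.
move=> rigid_i same_u Mij.
have same_payoff : forced_payoff G M [set i] set0 = forced_payoff G M' [set i] set0.
  by rewrite (forced_payoff_rigidP matchM stableM rigid_i)
             (forced_payoff_rigidP matchM' stableM' rigid_i).
have [same_row _] := nondeg _ _ matchM matchM' _ _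
  (minimal_forced_both_rigidP M M' rigid_i) same_payoff.
by rewrite -(same_row i j (set11 i)).
Qed.

Lemma indifferent_partner_rigidQ i j :
  M i j -> u i = u' i -> v' j < v j -> rigidQ G j.
Proof.
move=> Mij same_u less_v; apply/negPn/negP => flex_j.
have [_ tight] := stable_payoffs_tight matchM stableM.
have tight_ij := tight i j Mij.
case rigid_i: (rigidP G i).
- have M'ij := rigidP_indifferent_keeps_partner i j rigid_i same_u Mij.
  have [[_ rigidPpay _ _] _ _] := stableM.
  have [[_ rigidPpay' _ _] _ _] := stableM'.
  have [u_beta _] := rigidPpay _ _ Mij rigid_i.
  have [_ gamma_le] := rigidPpay' _ _ M'ij rigid_i.
  by move: (gamma_le flex_j) tight_ij u_beta; rewrite /alpha; lra.
- have [_ flexible _] := stableM'.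
  by move: (flexible i j (negbT rigid_i) flex_j) tight_ij; lra.
Qed.

End Indifference.

Theorem lemma2 (R : realType) (n : nat) (G : rifle_game R n)
    (u v u' v' : 'I_n -> R) (M M' : rel 'I_n) :
  non_degenerate G ->
  is_matching M -> is_matching M' ->
  stable G u v M -> stable G u' v' M' ->
  forall i j : 'I_n, M i j ->
    (u i = u' i -> v' j < v j -> rigidQ G j) /\
    (v j = v' j -> u' i < u i -> rigidP G i).
Proof.
move=> nondeg matchM matchM' stableM stableM' i j Mij; split.
  exact: indifferent_partner_rigidQ nondeg matchM matchM' stableM stableM' i j Mij.
exact: (indifferent_partner_rigidQ (non_degenerate_transpose nondeg)
  (is_matching_transpose matchM) (is_matching_transpose matchM')
  (stable_transpose stableM) (stable_transpose stableM') j i Mij).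
Qed.
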